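(* Let $R\in\mathbb{R}^{n\times m}$ be a matrix such that $\mathcal{K}_{\mathcal{R}}(R)=\{Rp: p\in\mathbb{R}^m,\ p\ge 0\}$ is a proper cone. Let $\mathcal{X}\subseteq\mathbb{R}^n$ and let $f:\mathcal{X}\to\mathbb{R}^n$ be differentiable with Jacobian $\partial f(x)$. Suppose that for every $x\in\mathcal{X}$ there exist $\alpha\in\mathbb{R}$ and a matrix $P\in\mathbb{R}^{m\times m}$ with all entries strictly positive such that $$(\alpha I+\partial f(x))R=RP.$$ Then the system $\dot x=f(x)$ is strictly K-cooperative with respect to $\mathcal{K}_{\mathcal{R}}(R)$.
   Context: Inequalities between vectors/matrices are entrywise; $P>0$ means every entry of $P$ is strictly positive. A proper cone is a set $\mathcal{K}\subseteq\mathbb{R}^n$ such that: (i) if $r_1,r_2\in\mathcal{K}$ and $p_1,p_2\ge 0$ are real, then $p_1r_1+p_2r_2\in\mathcal{K}$; (ii) $\mathcal{K}$ has nonempty interior; (iii) if $r\in\mathcal{K}\setminus\{0\}$ then $-r\notin\mathcal{K}$. The dual cone is $\mathcal{K}^*=\{h:\langle h,r\rangle\ge 0\ \forall r\in\mathcal{K}\}$. Strict K-cooperativity: for a proper cone $\mathcal{K}$ and differentiable $f:\mathcal{X}\to\mathbb{R}^n$, the system $\dot x=f(x)$ is strictly K-cooperative with respect to $\mathcal{K}$ if for all $x\in\mathcal{X}$, all $\delta x\in\mathcal{K}\setminus\{0\}$ and all $h\in\mathcal{K}^*\setminus\{0\}$, $\langle h,\delta x\rangle=0$ implies $\langle h,\partial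 f(x)\,\delta x\rangle>0$. *)

(* vectors in R^n are column vectors 'cV[R]_n over an
   arbitrary real field R (the paper's R = the reals is an instance). *)
From HB Require Import structures.
From mathcomp Require Import all_boot all_order all_algebra.
Set Implicit Arguments. Unset Strict Implicit. Unset Printing Implicit Defensive.
Import Order.TTheory GRing.Theory Num.Theory.
Local Open Scope ring_scope.

Definition dotv (R : realFieldType) (n : nat) (h r : 'cV[R]_n) : R :=
  \sum_(i < n) h i 0 * r i 0.

Definition maxnorm (R : realFieldType) (n : nat) (v : 'cV[R]_n) : R :=
  \big[Num.max/0]_(i < n) `|v i 0|.

Definition proper_cone (R : realFieldType) (n : nat) (K : 'cV[R]_n -> Prop) : Prop :=
  [/\ (forall r1 r2 (p1 p2 : R), K r1 -> K r2 -> 0 <= p1 -> 0 <= p2 ->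
         K (p1 *: r1 + p2 *: r2)),
      (exists r, exists2 eps : R, 0 < eps &
         forall y, maxnorm (y - r) < eps -> K y)
    & (forall r, K r -> r != 0 -> ~ K (- r))].

Definition dual_cone (R : realFieldType) (n : nat) (K : 'cV[R]_n -> Prop)
  (h : 'cV[R]_n) : Prop :=
  forall r, K r -> 0 <= dotv h r.

Definition cone_of (R : realFieldType) (n m : nat) (Rm : 'M[R]_(n, m))
  (r : 'cV[R]_n) : Prop :=
  exists2 p : 'cV[R]_m, (forall i, 0 <= p i 0) & r = Rm *m p.

Definition is_jacobian (R : realFieldType) (n : nat) (X : 'cV[R]_n -> Prop)
  (f : 'cV[R]_n -> 'cV[R]_n) (J : 'cV[R]_n -> 'M[R]_n) : Prop :=
  forall x, X x -> forall eps : R, 0 < eps -> exists2 d : R, 0 < d &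
    forall y, X y -> maxnorm (y - x) < d ->
      maxnorm (f y - f x - J x *m (y - x)) <= eps * maxnorm (y - x).

Definition strictly_K_cooperative (R : realFieldType) (n : nat)
  (K : 'cV[R]_n -> Prop) (X : 'cV[R]_n -> Prop) (J : 'cV[R]_n -> 'M[R]_n) : Prop :=
  forall x, X x -> forall dx h, K dx -> dx != 0 -> dual_cone K h -> h != 0 ->
    dotv h dx = 0 -> 0 < dotv h (J x *m dx).

From HB Require Import structures.
From mathcomp Require Import all_boot all_order all_algebra.
Set Implicit Arguments. Unset Strict Implicit. Unset Printing Implicit Defensive.
Import Order.TTheory GRing.Theory Num.Theory.
Local Open Scope ring_scope.

(* Let x be in X, dx = R p with p >= 0 (so p <> 0 as dx <> 0),
   and h a nonzero element of the dual cone with <h, dx> = 0.  Put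
   q = R^T h.  Testing h against the generators R e_j of the cone gives
   q >= 0; and q <> 0, for otherwise h vanishes on the whole cone, which
   has nonempty interior, forcing h = 0.  The hypothesis rewrites
   J(x) R as R P - alpha R, hence
     <h, J(x) dx> = <q, P p> - alpha <h, dx> = <q, P p>,
   and <q, P p> > 0 because P p has all entries positive (P > 0, p >= 0,
   p <> 0) while q >= 0 is nonzero. *)

Section InnerProduct.
Variable R : realFieldType.

Lemma dotv_mxE n (h v : 'cV[R]_n) : dotv h v = (h^T *m v) 0 0.
Proof. by rewrite /dotv mxE; apply: eq_bigr => i _; rewrite mxE. Qed.

Lemma dotv_mulmx n m (A : 'M[R]_(n, m)) (h : 'cV[R]_n) (p : 'cV[R]_m) :
  dotv h (A *m p) = dotv (A^T *m h) p.
Proof. by rewrite !dotv_mxE trmx_mul trmxK mulmxA. Qed.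

Lemma dotvDZ n (h a b : 'cV[R]_n) (c : R) :
  dotv h (a + c *: b) = dotv h a + c * dotv h b.
Proof.
rewrite /dotv mulr_sumr -big_split; apply: eq_bigr => i _.
by rewrite !mxE mulrDr mulrCA.
Qed.

Lemma dotv_deltar n (h : 'cV[R]_n) j : dotv h (delta_mx j 0) = h j 0.
Proof. by rewrite dotv_mxE -colE !mxE. Qed.


Lemma maxnorm_lt n (v : 'cV[R]_n) (eps : R) :
  0 < eps -> (forall i, `|v i 0| < eps) -> maxnorm v < eps.
Proof.
move=> eps_gt0 small; rewrite /maxnorm; elim/big_ind: _ => //.
by move=> a b Ha Hb; rewrite gt_max Ha Hb.
Qed.

End InnerProduct.

Section Positivity.
Variable R : realFieldType.

Lemma sumr_gt0_witness (I : finType) (F : I -> R) (k : I) :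
  (forall i, 0 <= F i) -> 0 < F k -> 0 < \sum_i F i.
Proof.
move=> F_ge0 Fk_gt0; rewrite lt_def sumr_ge0 // andbT.
apply/eqP => /(psumr_eq0P (fun i _ => F_ge0 i)) /(_ k isT) Fk0.
by rewrite Fk0 ltxx in Fk_gt0.
Qed.

Lemma nonneg_nonzero_pos m (v : 'cV[R]_m) :
  (forall i, 0 <= v i 0) -> v != 0 -> exists j, 0 < v j 0.
Proof.
move=> v_ge0 vn0; have [/existsP [j vj]|/existsPn v0] :=
  boolP [exists j, v j 0 != 0]; first by exists j; rewrite lt_def vj v_ge0.
case/negP: vn0; apply/eqP/matrixP => i k; rewrite (ord1 k) mxE.
by apply/eqP; move: (v0 i); rewrite negbK.
Qed.

Lemma pos_mx_mul_gt0 m (P : 'M[R]_m) (p : 'cV[R]_m) :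
  (forall i j, 0 < P i j) -> (forall i, 0 <= p i 0) -> p != 0 ->
  forall i, 0 < (P *m p) i 0.
Proof.
move=> P_gt0 p_ge0 pn0 i; have [k pk_gt0] := nonneg_nonzero_pos p_ge0 pn0.
rewrite mxE; apply: (sumr_gt0_witness (k := k)); last by rewrite mulr_gt0.
by move=> l; rewrite mulr_ge0 ?p_ge0 ?ltW.
Qed.

Lemma dotv_gt0 m (q v : 'cV[R]_m) :
  (forall i, 0 <= q i 0) -> q != 0 -> (forall i, 0 < v i 0) -> 0 < dotv q v.
Proof.
move=> q_ge0 qn0 v_gt0; have [j qj_gt0] := nonneg_nonzero_pos q_ge0 qn0.
apply: (sumr_gt0_witness (k := j)); last by rewrite mulr_gt0.
by move=> l; rewrite mulr_ge0 ?q_ge0 ?ltW.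
Qed.

End Positivity.

Section DualOfPolyhedralCone.
Variables (R : realFieldType) (n m : nat) (Rm : 'M[R]_(n, m)).

(* A dual-cone element h of K_R(Rm) satisfies Rm^T h >= 0: test h against
   the generators Rm e_j. *)
Lemma dual_cone_of_ge0 (h : 'cV[R]_n) :
  dual_cone (cone_of Rm) h -> forall j, 0 <= (Rm^T *m h) j 0.
Proof.
move=> h_dual j; rewrite -dotv_deltar -dotv_mulmx; apply: h_dual.
by exists (delta_mx j 0) => // i; rewrite mxE; case: (_ && _).
Qed.

(* A linear functional vanishing on a set with an interior point is zero:
   it vanishes at the centre r of a ball and at r + (eps/2) e_i. *)
Lemma vanishing_on_interior (K : 'cV[R]_n -> Prop) (h : 'cV[R]_n) :
  (exists r, exists2 eps : R, 0 < eps & forall y, maxnorm (y - r) < eps -> K y) ->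
  (forall y, K y -> dotv h y = 0) -> h = 0.
Proof.
move=> [r [eps eps_gt0 ball_in]] h_van; apply/matrixP => i k.
rewrite (ord1 k) [RHS]mxE.
have eps2_gt0 : 0 < eps / 2 by rewrite divr_gt0.
have Kr : K r.
  by apply: ball_in; rewrite subrr; apply: maxnorm_lt => // j; rewrite mxE normr0.
have Kri : K (r + (eps / 2) *: delta_mx i 0).
  apply: ball_in; rewrite (addrC r) addrK; apply: maxnorm_lt => // j.
  rewrite !mxE; case: (_ && _); rewrite /= ?mulr1 ?mulr0 ?normr0 //.
  by rewrite gtr0_norm // ltr_pdivrMr // ltr_pMr // ltr1n.
move: (h_van _ Kri); rewrite dotvDZ h_van // add0r dotv_deltar => /eqP.
by rewrite mulf_eq0 gt_eqF //= => /eqP.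
Qed.

(* If K_R(Rm) has nonempty interior, Rm^T is injective on vectors:
   Rm^T h = 0 means h vanishes on the cone. *)
Lemma trmx_mul_neq0 (h : 'cV[R]_n) :
  proper_cone (cone_of Rm) -> h != 0 -> Rm^T *m h != 0.
Proof.
move=> [_ interior _] hn0; apply: contraNneq hn0 => q0.
apply/eqP/(vanishing_on_interior interior) => _ [p _ ->].
by rewrite dotv_mulmx q0 /dotv big1 // => j _; rewrite mxE mul0r.
Qed.

End DualOfPolyhedralCone.

Theorem proposition3 (R : realFieldType) (n m : nat) (Rm : 'M[R]_(n, m))
  (X : 'cV[R]_n -> Prop) (f : 'cV[R]_n -> 'cV[R]_n) (J : 'cV[R]_n -> 'M[R]_n) :
  proper_cone (cone_of Rm) ->
  is_jacobian X f J ->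
  (forall x, X x -> exists (alpha : R) (P : 'M[R]_m),
      (forall i j, 0 < P i j) /\ (alpha%:M + J x) *m Rm = Rm *m P) ->
  strictly_K_cooperative (cone_of Rm) X J.
Proof.
move=> Kproper _ HP x Xx _ h [p p_ge0 ->] dxn0 h_dual hn0 h_dx0.
have [alpha [P [P_gt0 HPe]]] := HP x Xx.
have pn0 : p != 0 by apply: contraNneq dxn0 => ->; rewrite mulmx0.
have JRm : J x *m Rm = Rm *m P - alpha *: Rm.
  by rewrite -HPe mulmxDl mul_scalar_mx addrAC subrr add0r.
have -> : dotv h (J x *m (Rm *m p)) = dotv (Rm^T *m h) (P *m p).
  rewrite mulmxA JRm mulmxBl -scalemxAl -scaleNr dotvDZ h_dx0 mulr0 addr0.
  by rewrite -mulmxA [LHS]dotv_mulmx.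
apply: dotv_gt0; first exact: dual_cone_of_ge0.
  exact: trmx_mul_neq0.
exact: pos_mx_mul_gt0.
Qed.
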